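(* Let $X$ be a compactum, let $n\geq2$, and let $f:X\to X$ be a function. Consider the statements: (1) $f$ is two-sided transitive; (2) $F_n(f)$ is two-sided transitive; (3) $SF_n(f)$ is two-sided transitive. Then (2) and (3) are equivalent, and (2) implies (1).
   Context: A compactum is a nondegenerate compact, perfect, Hausdorff topological space. $F_n(X)$ is the set of nonempty subsets of $X$ with at most $n$ points, with the Vietoris topology; $F_1(X)=\{\{x\}:x\in X\}$; $F_n(f)(A)=f(A)$. $SF_n(X)=F_n(X)/F_1(X)$ is the quotient collapsing $F_1(X)$ to a point, $q$ the quotient map, $F_X=q(F_1(X))$, and $SF_n(f)(\chi)=q(F_n(f)(q^{-1}(\chi)))$ for $\chi\neq F_X$, $SF_n(f)(F_X)=F_X$. A function $g:Z\to Z$ is two-sided transitive if $g$ is a homeomorphism and there is $z\in Z$ such that $\{g^k(z):k\in\mathbb{Z}\}$ is dense in $Z$. *)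

From HB Require Import structures.
From mathcomp Require Import all_boot all_order all_algebra.
From mathcomp Require Import all_classical all_reals topology.
Set Implicit Arguments. Unset Strict Implicit. Unset Printing Implicit Defensive.
Import Order.TTheory GRing.Theory Num.Theory.
Local Open Scope classical_set_scope.

Definition compactum (X : topologicalType) : Prop :=
  [/\ compact [set: X], hausdorff_space X, perfect_set [set: X]
    & exists x y : X, x <> y].

Definition two_sided_transitive (T : topologicalType) (g : T -> T) : Prop :=
  exists h : T -> T,
    [/\ continuous g, continuous h, cancel g h, cancel h g &
      exists z : T,
        dense [set y | exists k : nat, y = iter k g z \/ y = iter k h z]].

Definition Fn_pred (X : choiceType) (n : nat) (A : set X) : Prop :=
  A !=set0 /\ exists s : seq X, (size s <= n)%N /\ A = [set x | x \in s].

Record Fn (X : topologicalType) (n : nat) := MkFn {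
  fn_set :> set X;
  fn_prop : `[< Fn_pred n fn_set >] }.
Arguments MkFn {X n}.

Section FnTop.
Variables (X : topologicalType) (n : nat).

HB.instance Definition _ := [isSub for @fn_set X n].
HB.instance Definition _ := [Choice of Fn X n by <:].

(* Vietoris topology: generated by the subbase
   {A | A ⊆ U} and {A | A ∩ U ≠ ∅}, U open in X. *)
Definition vietoris_subbase (p : bool * set X) : set (Fn X n) :=
  if p.1 then [set A | (A : set X) `<=` p.2]
  else [set A | (A : set X) `&` p.2 !=set0].

HB.instance Definition _ :=
  @isSubBaseTopological.Build (Fn X n) (bool * set X)%type
    [set p | open p.2] vietoris_subbase.

End FnTop.

Lemma Fn_map_prop (X : topologicalType) (n : nat) (f : X -> X) (A : Fn X n) :
  `[< Fn_pred n (f @` (A : set X)) >].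
Proof.
apply/asboolP; case: A => A /= HA.
have [[a Aa] [s [sn EA]]] : Fn_pred n A by exact/asboolP.
rewrite EA in Aa *; split.
  by exists (f a), a.
exists (map f s); rewrite size_map; split => //.
apply/seteqP; split => y /=.
  by case=> x xs <-; exact: map_f.
by case/mapP => x xs ->; exists x.
Qed.

Definition Fn_map (X : topologicalType) (n : nat) (f : X -> X) (A : Fn X n)
  : Fn X n := MkFn (f @` (A : set X)) (Fn_map_prop f A).

Definition Fn_singleton (X : topologicalType) (n : nat) (A : Fn X n) : Prop :=
  exists x : X, (A : set X) = [set x].

(* Points of SF_n(X): either the collapsed point F_X (None) or the class of
   a non-singleton A (Some A). *)
Definition SFn (X : topologicalType) (n : nat) : Type :=
  option {A : Fn X n | ~~ `[< Fn_singleton A >]}.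

Definition SFq (X : topologicalType) (n : nat) (A : Fn X n) : SFn X n :=
  insub A.

Section SFnTop.
Variables (X : topologicalType) (n : nat).

HB.instance Definition _ := Choice.on (SFn X n).

Definition SFn_open (U : set (SFn X n)) : Prop := open (@SFq X n @^-1` U).

Program Definition SFn_topological_mixin :=
  @isOpenTopological.Build (SFn X n) SFn_open _ _ _.
Next Obligation. by rewrite /SFn_open preimage_setT; exact: openT. Qed.
Next Obligation. by move=> ? ? ? ?; exact: openI. Qed.
Next Obligation. by move=> I f ofi; apply: bigcup_open => i _; exact: ofi. Qed.
HB.instance Definition _ := SFn_topological_mixin.

End SFnTop.

Definition SFn_map (X : topologicalType) (n : nat) (f : X -> X)
  (chi : SFn X n) : SFn X n :=
  match chi with
  | None => None
  | Some B => SFq (Fn_map f (val B))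
  end.

From HB Require Import structures.
From mathcomp Require Import all_boot all_order all_algebra.
From mathcomp Require Import all_classical all_reals topology.
Set Implicit Arguments. Unset Strict Implicit. Unset Printing Implicit Defensive.
Local Open Scope classical_set_scope.

(* Everything rests on the pairs {x, y} of F_n(X), n >= 2, which depend
   continuously on x and y.  Evaluating F_n(f) or SF_n(f) on them shows that f
   is a homeomorphism as soon as either map is: bijectivity is read off {x, y}
   and {x, x} = {x}, continuity off x |-> {x} for F_n(f), and off x |-> q{x, y}
   with y fixed for SF_n(f), where Hausdorffness and a second point of X enter.
   The quotient map q is continuous, onto and semiconjugates F_n(f) to SF_n(f),
   so it carries dense orbits to dense orbits: (2) gives (3).  Conversely, X
   being Hausdorff and perfect, the non-singletons form a dense open subset of
   F_n(X) on which q is an open embedding, and a dense orbit of SF_n(f) is not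
   that of the fixed point F_X, so it pulls back to a dense orbit of F_n(f).
   Finally, if the orbit of A is dense in F_n(X) then so is the orbit of any
   point of A in X, as {B | B `<=` U} is a nonempty open set for every nonempty
   open U. *)

Definition two_sided_orbit (T : Type) (g h : T -> T) (z : T) : set T :=
  [set y | exists k : nat, y = iter k g z \/ y = iter k h z].

Lemma two_sided_transitiveE (T : topologicalType) (g h : T -> T) :
  cancel g h -> cancel h g ->
  two_sided_transitive g <->
  [/\ continuous g, continuous h & exists z, dense (two_sided_orbit g h z)].
Proof.
move=> gK hK; split; last by case=> gc hc orb; exists h.
case=> h' [gc h'c gK' _ orb].
suff -> : h = h' by [].
by apply/funext => x; rewrite -{2}(hK x) gK'.
Qed.

Lemma two_sided_transitive_bij (T : topologicalType) (g : T -> T) :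
  two_sided_transitive g -> bijective g.
Proof. by case=> h [_ _ gK hK _]; exists h. Qed.

Lemma iter_semiconj (S T : Type) (p : S -> T) (g : S -> S) (g' : T -> T) k z :
  p \o g =1 g' \o p -> p (iter k g z) = iter k g' (p z).
Proof. by move=> pg; elim: k => [|k IH] //=; rewrite -IH; exact: pg. Qed.

Lemma dense_orbit_image (S T : topologicalType) (p : S -> T)
    (g h : S -> S) (g' h' : T -> T) z :
  continuous p -> (forall t, exists s, p s = t) ->
  p \o g =1 g' \o p -> p \o h =1 h' \o p ->
  dense (two_sided_orbit g h z) -> dense (two_sided_orbit g' h' (p z)).
Proof.
move=> /continuousP pc psurj pg ph dz O [t Ot] oO.
have [s pst] := psurj t.
have [|y [Oy [k eky]]] := dz (p @^-1` O) _ (pc O oO); first by exists s; rewrite /= pst.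
exists (p y); split => //; exists k.
by case: eky => ->; [left; exact: iter_semiconj | right; exact: iter_semiconj].
Qed.

Section Vietoris.
Variables (X : topologicalType) (n : nat).
Implicit Types (U : set X) (A : Fn X n).

Lemma Fn_nonempty A : exists a, (A : set X) a.
Proof. by case: A => A /= /asboolP [[a Aa] _]; exists a. Qed.

Lemma open_vietoris_subbase (p : bool * set X) :
  open p.2 -> open (@vietoris_subbase X n p).
Proof.
move=> op; exists [set vietoris_subbase p]; last by rewrite bigcup_set1.
by move=> _ ->; exact: finI_from1.
Qed.

Lemma open_Fn_sub U : open U -> open [set A : Fn X n | (A : set X) `<=` U].
Proof. exact: (@open_vietoris_subbase (true, U)). Qed.

Lemma open_Fn_meet U : open U -> open [set A : Fn X n | (A : set X) `&` U !=set0].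
Proof. exact: (@open_vietoris_subbase (false, U)). Qed.

Lemma continuous_to_Fn (T : topologicalType) (g : T -> Fn X n) :
  (forall U, open U -> open (g @^-1` [set A | (A : set X) `<=` U])) ->
  (forall U, open U -> open (g @^-1` [set A | (A : set X) `&` U !=set0])) ->
  continuous g.
Proof.
move=> gsub gmeet; apply/continuousP => _ [D sD <-].
rewrite preimage_bigcup; apply: bigcup_open => _ /sD [F sF <-].
rewrite preimage_bigcap openE => t Ft; apply: filter_bigI => -[b U] iF.
apply: open_nbhs_nbhs; split; last exact: Ft.
have := sF _ iF; rewrite in_setE => oU.
by case: b {iF} oU; [exact: gsub | exact: gmeet].
Qed.

Lemma iter_Fn_map (g : X -> X) k A :
  (iter k (Fn_map g) A : set X) = iter k g @` (A : set X).
Proof.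
elim: k => [|k IH]; first by rewrite image_id.
by rewrite iterS /= IH image_comp.
Qed.

Lemma Fn_map_can (g g' : X -> X) :
  cancel g g' -> cancel (@Fn_map X n g) (Fn_map g').
Proof.
move=> gK A; apply: val_inj => /=; rewrite image_comp.
by apply: eq_image_id => x _; exact: gK.
Qed.

Lemma Fn_map_continuous (g : X -> X) :
  continuous g -> continuous (@Fn_map X n g).
Proof.
move=> /continuousP gc; apply: continuous_to_Fn => U oU.
  rewrite (_ : _ @^-1` _ = [set A : Fn X n | (A : set X) `<=` g @^-1` U]).
    exact/open_Fn_sub/gc.
  by apply/seteqP; split => A /=; rewrite image_sub.
rewrite (_ : _ @^-1` _ = [set A : Fn X n | (A : set X) `&` g @^-1` U !=set0]).
  exact/open_Fn_meet/gc.
apply/seteqP; split => A /=.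
  by case=> _ [[a Aa <-] Uga]; exists a.
by case=> a [Aa Uga]; exists (g a); split => //; exists a.
Qed.

Section Pairs.
Hypothesis n2 : (1 < n)%N.

Lemma Fn_pair_prop (x y : X) : `[< Fn_pred n [set z | z \in [:: x; y]] >].
Proof.
apply/asboolP; split; last by exists [:: x; y].
by exists x; rewrite /= inE eqxx.
Qed.

Definition Fn_pair (x y : X) : Fn X n := MkFn _ (Fn_pair_prop x y).

Lemma in_Fn_pair x y z : (Fn_pair x y : set X) z <-> z = x \/ z = y.
Proof.
rewrite /= !inE; split => [/orP[]/eqP -> | [] ->].
- by left.
- by right.
- by rewrite eqxx.
- by rewrite eqxx orbT.
Qed.

Lemma Fn_pair_l x y : (Fn_pair x y : set X) x.
Proof. by apply/in_Fn_pair; left. Qed.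

Lemma Fn_pair_r x y : (Fn_pair x y : set X) y.
Proof. by apply/in_Fn_pair; right. Qed.

Lemma Fn_pairxx x : (Fn_pair x x : set X) = [set x].
Proof.
by apply/seteqP; split => z; [case/in_Fn_pair => -> | move=> ->; exact: Fn_pair_l].
Qed.

Lemma Fn_map_pair (g : X -> X) x y : Fn_map g (Fn_pair x y) = Fn_pair (g x) (g y).
Proof.
apply: val_inj; apply/seteqP; split => z /=.
  by case=> w /in_Fn_pair [|] -> <-; [exact: Fn_pair_l | exact: Fn_pair_r].
case/in_Fn_pair => ->; first by exists x => //; exact: Fn_pair_l.
by exists y => //; exact: Fn_pair_r.
Qed.

Lemma Fn_pair_nonsingleton x y : x <> y -> ~ Fn_singleton (Fn_pair x y).
Proof.
move=> xy [w Ew]; apply: xy.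
by have := Fn_pair_l x y; have := Fn_pair_r x y; rewrite Ew /= => -> ->.
Qed.

Lemma Fn_pair_continuous (T : topologicalType) (a b : T -> X) :
  continuous a -> continuous b -> continuous (fun t => Fn_pair (a t) (b t)).
Proof.
move=> /continuousP ac /continuousP bc; apply: continuous_to_Fn => U oU.
  rewrite (_ : _ @^-1` _ = a @^-1` U `&` b @^-1` U).
    by apply: openI; [exact: ac | exact: bc].
  apply/seteqP; split => t /=; last by case=> Uat Ubt z /in_Fn_pair [|] ->.
  by move=> sU; split; apply: sU; [exact: Fn_pair_l | exact: Fn_pair_r].
rewrite (_ : _ @^-1` _ = a @^-1` U `|` b @^-1` U).
  by apply: openU; [exact: ac | exact: bc].
apply/seteqP; split => t /=; first by case=> z [/in_Fn_pair [|] -> Uz]; [left | right].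
case=> [Uat | Ubt]; first by exists (a t); split => //; exact: Fn_pair_l.
by exists (b t); split => //; exact: Fn_pair_r.
Qed.

Lemma continuous_of_Fn_map (g : X -> X) :
  continuous (@Fn_map X n g) -> continuous g.
Proof.
move=> /continuousP gc; apply/continuousP => U oU.
have /continuousP diagc := Fn_pair_continuous (fun=> cvg_id) (fun=> cvg_id).
have := diagc _ (gc _ (open_Fn_sub oU)); congr open.
apply/seteqP; split => x /=; first by apply; exists x => //; exact: Fn_pair_l.
by move=> Ugx _ [z /in_Fn_pair [] -> <-].
Qed.

Lemma Fn_map_bij (g : X -> X) : bijective (@Fn_map X n g) -> bijective g.
Proof.
move=> [G gK GK]; rewrite -setTT_bijective; split => // [x y _ _ gxy | y _].
  have /(can_inj gK) exy : Fn_map g (Fn_pair x y) = Fn_map g (Fn_pair x x).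
    by rewrite !Fn_map_pair gxy.
  by have := Fn_pair_r x y; rewrite exy Fn_pairxx.
have := Fn_pair_l y y; rewrite -[Fn_pair y y]GK /=.
by case=> x _ <-; exists x.
Qed.

Lemma dense_orbit_of_Fn_map (g h : X -> X) A a : (A : set X) a ->
  dense (two_sided_orbit (Fn_map g) (Fn_map h) A) ->
  dense (two_sided_orbit g h a).
Proof.
move=> Aa dA O [o Oo] oO.
have [|B [BO [k ekB]]] := dA _ _ (open_Fn_sub oO).
  by exists (Fn_pair o o) => z /in_Fn_pair [] ->.
case: ekB => ekB; [exists (iter k g a) | exists (iter k h a)].
  by split; [apply: BO; rewrite ekB iter_Fn_map; exists a | exists k; left].
by split; [apply: BO; rewrite ekB iter_Fn_map; exists a | exists k; right].
Qed.

End Pairs.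
End Vietoris.

Section Quotient.
Variables (X : topologicalType) (n : nat).
Implicit Types (A : Fn X n) (g : X -> X).
Local Notation q := (@SFq X n).

Lemma SFq_continuous : continuous q.
Proof. by apply/continuousP. Qed.

Lemma SFqK (B : {A : Fn X n | ~~ `[< Fn_singleton A >]}) : SFq (val B) = Some B.
Proof. exact: valK. Qed.

Lemma SFq_Some A B : SFq A = Some B -> val B = A.
Proof. by rewrite /SFq; case: insubP => // C _ <- [->]. Qed.

Lemma SFq_None A : SFq A = None <-> Fn_singleton A.
Proof.
rewrite /SFq; case: insubP => [C /asboolPn nsA _ | /negPn/asboolP sA]; by split.
Qed.

Lemma SFq_Fn_map g A : SFn_map g (SFq A) = SFq (Fn_map g A).
Proof.
case eA: (SFq A) => [B|] /=; first by rewrite (SFq_Some eA).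
have [x Ax] := (SFq_None A).1 eA.
by apply/esym/SFq_None; exists (g x); rewrite /= Ax image_set1.
Qed.

Lemma iter_SFq g k A : iter k (SFn_map g) (SFq A) = SFq (iter k (Fn_map g) A).
Proof. by elim: k => [|k IH] //=; rewrite IH SFq_Fn_map. Qed.

Lemma SFn_map_can g g' : cancel g g' -> cancel (SFn_map (n := n) g) (SFn_map g').
Proof. by move=> gK [B|] //=; rewrite SFq_Fn_map (Fn_map_can gK) SFqK. Qed.

Lemma SFn_map_continuous g :
  continuous (@Fn_map X n g) -> continuous (SFn_map (n := n) g).
Proof.
move=> /continuousP gc; apply/continuousP => U oU.
rewrite /open /= /SFn_open (_ : _ @^-1` _ = Fn_map g @^-1` (q @^-1` U)).
  exact: gc.
by apply/seteqP; split => A /=; rewrite SFq_Fn_map.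
Qed.

Lemma SFq_surj (n2 : (1 < n)%N) (x : X) (chi : SFn X n) : exists A, SFq A = chi.
Proof.
case: chi => [B|]; first by exists (val B); rewrite SFqK.
by exists (Fn_pair n2 x x); apply/SFq_None; exists x; rewrite Fn_pairxx.
Qed.

Lemma in_SFq_image (O : set (Fn X n)) A :
  O `<=` ~` @Fn_singleton X n -> (q @` O) (SFq A) <-> O A.
Proof.
move=> nsO; split; last by exists A.
case=> B OB; case eB: (SFq B) => [C|] eA.
  by rewrite -(SFq_Some (esym eA)) (SFq_Some eB).
by case: (nsO B OB); apply/SFq_None.
Qed.

Lemma open_SFq_image (O : set (Fn X n)) :
  open O -> O `<=` ~` @Fn_singleton X n -> open (q @` O).
Proof.
move=> oO nsO; rewrite /open /= /SFn_open.
by rewrite (_ : _ @^-1` _ = O) //; apply/seteqP; split => A /in_SFq_image; apply.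
Qed.

End Quotient.

Lemma hausdorff_separate (T : topologicalType) : hausdorff_space T ->
  forall x y : T, x <> y ->
  exists U V, [/\ open U, open V, U x, V y & U `&` V = set0].
Proof.
rewrite open_hausdorff => hT x y /eqP /hT [[U V] /=]; rewrite !in_setE.
by move=> [Ux Vy] [oU oV UV]; exists U, V.
Qed.

Section Separated.
Variables (X : topologicalType) (n : nat).
Hypothesis n2 : (1 < n)%N.
Hypothesis X_hausdorff : hausdorff_space X.
Implicit Types (U V : set X) (A : Fn X n) (g h : X -> X).
Local Notation q := (@SFq X n).

Definition Fn_meet2 U V : set (Fn X n) :=
  [set A | (A : set X) `&` U !=set0 /\ (A : set X) `&` V !=set0].

Lemma open_Fn_meet2 U V : open U -> open V -> open (Fn_meet2 U V).
Proof. by move=> oU oV; apply: openI; apply: open_Fn_meet. Qed.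

Lemma Fn_meet2_nonsingleton U V :
  U `&` V = set0 -> Fn_meet2 U V `<=` ~` @Fn_singleton X n.
Proof.
move=> UV A [[a [Aa Ua]] [b [Ab Vb]]] [x Ax].
move: Aa Ab; rewrite Ax => /= ea eb; subst a b.
by have : (U `&` V) x by []; rewrite UV.
Qed.

Lemma open_Fn_nonsingleton : open (~` @Fn_singleton X n).
Proof.
rewrite openE => A nsA; have [a Aa] := Fn_nonempty A.
have [b [Ab ba]] : exists b, (A : set X) b /\ b <> a.
  apply: contrapT => /forallNP nob; apply: nsA; exists a.
  apply/seteqP; split => [z Az | z ->] //.
  by apply: contrapT => za; apply: (nob z).
have [U [V [oU oV Ub Va UV]]] := hausdorff_separate X_hausdorff ba.
apply: (filterS (Fn_meet2_nonsingleton UV)); apply: open_nbhs_nbhs.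
by split; [exact: open_Fn_meet2 | split; [exists b | exists a]].
Qed.

Lemma dense_Fn_nonsingleton :
  perfect_set [set: X] -> dense (~` @Fn_singleton X n).
Proof.
move=> /perfectTP_ex pX O [A OA] oO.
have [[x eA]|nsA] := pselect (Fn_singleton A); last by exists A.
have /continuousP pc :=
  Fn_pair_continuous (n2 := n2) (fun=> cvg_id) (@cst_continuous _ _ x).
have [|t [u [Ot Ou /eqP tu]]] := pX _ (pc O oO).
  exists x; rewrite /= (_ : Fn_pair n2 x x = A) //.
  by apply: val_inj; rewrite [RHS]/= eA; exact: Fn_pairxx.
have [v [Ov vx]] : exists v : X, O (Fn_pair n2 v x) /\ v <> x.
  have [tx|] := pselect (t = x); last by exists t.
  by exists u; split => // ux; apply: tu; rewrite tx ux.
by exists (Fn_pair n2 v x); split => //; exact: Fn_pair_nonsingleton.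
Qed.

Lemma dense_orbit_of_SFq g h (B : Fn X n) :
  perfect_set [set: X] ->
  dense (two_sided_orbit (SFn_map g) (SFn_map h) (SFq B)) ->
  dense (two_sided_orbit (Fn_map g) (Fn_map h) B).
Proof.
move=> pX dB O O0 oO.
pose O' := O `&` ~` @Fn_singleton X n.
have nsO' : O' `<=` ~` @Fn_singleton X n by exact: subIsetr.
have oO' : open O' := openI oO open_Fn_nonsingleton.
have [|_ [[A O'A <-] [k ek]]] := dB _ _ (open_SFq_image oO' nsO').
  by have [A O'A] := dense_Fn_nonsingleton pX O0 oO; exists (SFq A), A.
have inO C : q A = q C -> O C.
  move=> eAC; have /(in_SFq_image _ nsO') [] // : (q @` O') (q C).
  by rewrite -eAC; exists A.
rewrite !iter_SFq in ek; case: ek => /inO Ok.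
  by exists (iter k (Fn_map g) B); split => //; exists k; left.
by exists (iter k (Fn_map h) B); split => //; exists k; right.
Qed.

Section Nondegenerate.
Hypothesis X_nondeg : exists x y : X, x <> y.

Lemma exists_neq (x : X) : exists y, y <> x.
Proof.
have [a [b ab]] := X_nondeg.
by have [->|xa] := pselect (x = a); [exists b => /esym | exists a => /esym].
Qed.

Lemma not_dense_orbit_None g h :
  ~ dense (two_sided_orbit (SFn_map (n := n) g) (SFn_map h) None).
Proof.
have oNS := open_SFq_image open_Fn_nonsingleton (@subset_refl _ _).
move=> dN; have [|_ [[A nsA <-] [k ek]]] := dN _ _ oNS.
  have [a [b ab]] := X_nondeg.
  exists (SFq (Fn_pair n2 a b)), (Fn_pair n2 a b) => //.
  exact: Fn_pair_nonsingleton.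
by apply: nsA; apply/SFq_None; case: ek => ->; exact: iter_fix.
Qed.

Lemma SFn_map_bij g : bijective (SFn_map (n := n) g) -> bijective g.
Proof.
move=> [G gK GK]; rewrite -setTT_bijective; split => // [x y _ _ gxy | y _].
  apply: contrapT => xy; apply: (Fn_pair_nonsingleton (n2 := n2) xy).
  apply/SFq_None.
  apply: (can_inj gK); rewrite SFq_Fn_map Fn_map_pair gxy /=.
  by apply/SFq_None; exists (g y); exact: Fn_pairxx.
have [y' y'y] := exists_neq y.
case eB: (SFq (Fn_pair n2 y y')) => [B|].
  have := GK (Some B); case: (G (Some B)) => [C|] //= /SFq_Some eC.
  have := Fn_pair_l n2 y y'; rewrite -(SFq_Some eB) eC.
  by case=> x _ <-; exists x.
by case: (Fn_pair_nonsingleton (n2 := n2) (not_eq_sym y'y)); apply/SFq_None.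
Qed.

Lemma continuous_of_SFn_map g :
  injective g -> continuous (SFn_map (n := n) g) -> continuous g.
Proof.
move=> ginj /continuousP gc; apply/continuousP => U oU; rewrite openE => x Ux.
have [y yx] := exists_neq x.
have gxy : g x <> g y by move/ginj/esym.
have [V1 [V2 [oV1 oV2 V1gx V2gy V12]]] := hausdorff_separate X_hausdorff gxy.
pose W := U `&` V1.
have WV2 : W `&` V2 = set0 by rewrite -setIA V12 setI0.
have nsW := Fn_meet2_nonsingleton WV2.
have oP := open_SFq_image (open_Fn_meet2 (openI oU oV1) oV2) nsW.
have /continuousP pc :=
  Fn_pair_continuous (n2 := n2) (fun=> cvg_id) (@cst_continuous _ _ y).
have /continuousP qc := @SFq_continuous X n.
have oQ := pc _ (qc _ (gc _ oP)).
(* Near x, the pair {g t, g y} still meets U `&` V1 and V2; since g y lies in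
   V2, which misses V1, the point of the pair in U `&` V1 must be g t. *)
have inQ t : (q @` Fn_meet2 W V2) (SFn_map g (q (Fn_pair n2 t y))) <->
    Fn_meet2 W V2 (Fn_pair n2 (g t) (g y)).
  by rewrite SFq_Fn_map Fn_map_pair in_SFq_image.
apply: (filterS _ (open_nbhs_nbhs (conj oQ _))) => [t /inQ|]; last first.
  apply/inQ; split; first by exists (g x); split; [exact: Fn_pair_l | split].
  by exists (g y); split; [exact: Fn_pair_r |].
case=> -[_ [/in_Fn_pair [] -> Wz]] _; first by case: Wz.
by have : (W `&` V2) (g y) by []; rewrite WV2.
Qed.

End Nondegenerate.
End Separated.

Section Transitivity.
Variables (X : topologicalType) (n : nat) (f : X -> X).
Hypothesis n2 : (1 < n)%N.

Lemma two_sided_transitive_of_Fn_map :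
  two_sided_transitive (Fn_map (n := n) f) -> two_sided_transitive f.
Proof.
move=> tr; have [h fK hK] := Fn_map_bij n2 (two_sided_transitive_bij tr).
have [Ffc Fhc [A dA]] := (two_sided_transitiveE (Fn_map_can fK) (Fn_map_can hK)).1 tr.
apply/(two_sided_transitiveE fK hK).
split; [exact: continuous_of_Fn_map Ffc | exact: continuous_of_Fn_map Fhc |].
by have [a Aa] := Fn_nonempty A; exists a; exact: dense_orbit_of_Fn_map Aa dA.
Qed.

Lemma two_sided_transitive_SFn_map :
  two_sided_transitive (Fn_map (n := n) f) -> two_sided_transitive (SFn_map (n := n) f).
Proof.
move=> tr; have [h fK hK] := Fn_map_bij n2 (two_sided_transitive_bij tr).
have [Ffc Fhc [A dA]] := (two_sided_transitiveE (Fn_map_can fK) (Fn_map_can hK)).1 tr.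
apply/(two_sided_transitiveE (SFn_map_can fK) (SFn_map_can hK)).
split; [exact: SFn_map_continuous | exact: SFn_map_continuous |].
have [a _] := Fn_nonempty A; exists (SFq A).
apply: dense_orbit_image dA; first exact: SFq_continuous.
- exact: SFq_surj n2 a.
- by move=> B /=; rewrite SFq_Fn_map.
- by move=> B /=; rewrite SFq_Fn_map.
Qed.

Lemma two_sided_transitive_Fn_map_of_SFn_map :
  hausdorff_space X -> perfect_set [set: X] -> (exists x y : X, x <> y) ->
  two_sided_transitive (SFn_map (n := n) f) -> two_sided_transitive (Fn_map (n := n) f).
Proof.
move=> hX pX nondeg tr.
have [h fK hK] := SFn_map_bij n2 nondeg (two_sided_transitive_bij tr).
have [Sfc Shc [chi dchi]] :=
  (two_sided_transitiveE (SFn_map_can fK) (SFn_map_can hK)).1 tr.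
apply/(two_sided_transitiveE (Fn_map_can fK) (Fn_map_can hK)); split.
- exact/Fn_map_continuous/(continuous_of_SFn_map n2 hX nondeg (can_inj fK)).
- exact/Fn_map_continuous/(continuous_of_SFn_map n2 hX nondeg (can_inj hK)).
case: chi dchi => [B|] dchi; last by case: (not_dense_orbit_None n2 hX nondeg dchi).
by exists (val B); apply: (dense_orbit_of_SFq n2 hX pX (B := val B) _); rewrite SFqK.
Qed.

End Transitivity.

Theorem theorem22 (X : topologicalType) (n : nat) (f : X -> X) :
  compactum X -> (2 <= n)%N ->
  (two_sided_transitive (Fn_map (n := n) f) <->
   two_sided_transitive (SFn_map (n := n) f)) /\
  (two_sided_transitive (Fn_map (n := n) f) -> two_sided_transitive f).
Proof.
move=> [_ hX pX nondeg] n2; split; first split.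
- exact: two_sided_transitive_SFn_map.
- exact: two_sided_transitive_Fn_map_of_SFn_map.
- exact: two_sided_transitive_of_Fn_map.
Qed.
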